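(* Let $q>1$ and $0<u<1$. Put weights on the edges $\lambda\to\Lambda$ of Young's lattice ($\Lambda$ obtained from $\lambda$ by adding one box): $m_{\lambda,\Lambda}=\frac{u}{q^{\lambda'_1}(q^{\lambda'_1+1}-1)}$ if the box is added to column $1$, and $m_{\lambda,\Lambda}=\frac{u\,(q^{-\lambda'_s}-q^{-\lambda'_{s-1}})}{q^{\lambda'_1}-1}$ if it is added to column $s>1$. Then for every standard Young tableau $T$, the probability that the Young Tableau Algorithm (run to termination) outputs $T$ equals $$\prod_{r=1}^\infty(1-u/q^r)\prod_{i=0}^{|T|-1}m_{\gamma_i,\gamma_{i+1}},$$ where $\emptyset=\gamma_0\subset\gamma_1\subset\dots\subset\gamma_{|T|}$ is the chain of shapes with $\gamma_k$ the shape formed by the entries $1,\dots,k$ of $T$.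
   Context: $\lambda'_s$ is the length of column $s$ of $\lambda$ ($0$ if empty). Young Tableau Algorithm: coins indexed by $N\ge1$, coin $N$ showing heads with probability $u/q^N$, all flips independent. Start with $\lambda=\emptyset$, $N=1$. Flip coin $N$. If tails, set $N\to N+1$ and flip the new coin. If heads, choose a column $S\ge1$ with $\Pr(S=1)=\frac{q^{N-\lambda'_1}-1}{q^N-1}$ and $\Pr(S=s)=\frac{q^{N-\lambda'_s}-q^{N-\lambda'_{s-1}}}{q^N-1}$ for $s>1$, add a box at the bottom of column $S$, and flip coin $N$ again. Almost surely only finitely many boxes are added; the output is the standard Young tableau obtained by labelling boxes $1,2,\dots$ in order of creation. *)

From HB Require Import structures.
From mathcomp Require Import all_boot all_order all_algebra.
From mathcomp Require Import all_classical all_reals all_analysis.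
Set Implicit Arguments. Unset Strict Implicit. Unset Printing Implicit Defensive.
Import Order.TTheory GRing.Theory Num.Theory numFieldNormedType.Exports.
Local Open Scope ring_scope.

(* ---------- Shapes ----------
   A shape (Young diagram) is represented by its list of column lengths
   lam' = [lam'_1; lam'_2; ...]  (trailing zeros allowed, irrelevant). *)
Definition shape := seq nat.

(* lam'_s for columns s >= 1 ; 0 for an empty / nonexistent column. *)
Definition colLen (lam : shape) (s : nat) : nat := nth 0%N lam s.-1.

Definition addBox (lam : shape) (s : nat) : shape := incr_nth lam s.-1.

(* ---------- Standard Young tableaux ----------
   A tableau is given as its list of columns, each listed top to bottom. *)
Definition tableau := seq (seq nat).

Definition tab_size (T : tableau) : nat := size (flatten T).

Definition standard (T : tableau) : Prop :=
  [/\ all (fun c => 0 < size c)%N T,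
      sorted geq (map size T),
      perm_eq (flatten T) (iota 1 (tab_size T)),
      all (sorted ltn) T &
      forall s i : nat, (i < size (nth [::] T s.+1))%N ->
        (nth 0 (nth [::] T s) i < nth 0 (nth [::] T s.+1) i)%N ].
                                                     (* rows strictly increase rightward *)

Definition gamma (T : tableau) (k : nat) : shape :=
  map (fun c => count (fun x => x <= k)%N c) T.

Definition col_of (T : tableau) (k : nat) : nat :=
  (find (fun c => k \in c) T).+1.

Section Algo.
Variable R : realType.
Variables q u : R.

(* coin N shows heads with probability u/q^N *)
Definition heads (N : nat) : R := u / q ^+ N.
Definition tails (N : nat) : R := 1 - u / q ^+ N.

(* Pr(S = s) when the current shape is lam and the current coin is N;
   q^(N - l) is written q^N / q^l *)
Definition colprob (lam : shape) (N s : nat) : R :=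
  if s == 1%N then (q ^+ N / q ^+ colLen lam 1 - 1) / (q ^+ N - 1)
  else (q ^+ N / q ^+ colLen lam s - q ^+ N / q ^+ colLen lam s.-1)
         / (q ^+ N - 1).

Definition tailprod (N : nat) : R :=
  limn (fun n : nat => \prod_(N <= r < n) tails r).

Local Open Scope ereal_scope.
(* probFrom cs lam N : probability that, starting from shape lam and about
   to flip coin N, the algorithm adds its subsequent boxes exactly to the
   columns listed in cs (in that order) and afterwards adds no more boxes.
   The next box is created at the first coin index M >= N showing heads
   (coins N, ..., M-1 having shown tails); the process then continues from
   the new shape, flipping coin M again. *)
Fixpoint probFrom (cs : seq nat) (lam : shape) (N : nat) : \bar R :=
  match cs with
  | [::] => (tailprod N)%:E
  | s :: cs' =>
      \sum_(N <= M <oo)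
        ((\prod_(N <= j < M) tails j) * heads M * colprob lam M s)%:E
          * probFrom cs' (addBox lam s) M
  end.
Local Close Scope ereal_scope.

(* Probability that the Young Tableau Algorithm (started with the empty shape
   and N = 1) outputs the tableau T: the k-th created box (k = 1..|T|) is
   added to the column of T containing k, and no further box is ever added. *)
Definition probOutput (T : tableau) : \bar R :=
  probFrom [seq col_of T k | k <- iota 1 (tab_size T)] [::] 1.

Definition mweight (lam : shape) (s : nat) : R :=
  if s == 1%N then
    u / (q ^+ colLen lam 1 * (q ^+ (colLen lam 1).+1 - 1))
  else u * ((q ^- colLen lam s) - (q ^- colLen lam s.-1))
         / (q ^+ colLen lam 1 - 1).

Definition diffcol (lam Lam : shape) : nat :=
  (find (fun j => nth 0%N lam j != nth 0%N Lam j)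
        (iota 0 (maxn (size lam) (size Lam)))).+1.

Definition medge (lam Lam : shape) : R := mweight lam (diffcol lam Lam).

End Algo.

From Pilot Require Import Defs.
From HB Require Import structures.
From mathcomp Require Import all_boot all_order all_algebra.
From mathcomp Require Import all_classical all_reals all_analysis.
From mathcomp Require Import ring zify.
Set Implicit Arguments.
Unset Strict Implicit.
Unset Printing Implicit Defensive.
Import Order.TTheory GRing.Theory Num.Theory numFieldNormedType.Exports.
Local Open Scope classical_set_scope.
Local Open Scope ring_scope.

(* Write a for the length λ'_1 of the first column, φ_a(M) = ∏_{j<a} (1 - q^(j-M))
   (so φ_0 = 1), and P_cs(λ, N) for the probability that, from shape λ with coin N
   about to be flipped, the algorithm adds its boxes exactly in the columns cs and
   then stops.  By induction on cs, for a >= 1,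
     Σ_{M>=1} (φ_a(M) - φ_a(M-1)) ∏_{1<=j<M} (1 - u/q^j) P_cs(λ, M)
       = ∏_{r>=1} (1 - u/q^r) ∏ m.
   Expanding P over the coin M' that places the next box and exchanging the sums
   telescopes the differences back into φ_a(M'), and the identity
     φ_a(M) (u/q^M) Pr(S = s) = m_{λ,λ+s} (φ_a'(M) - φ_a'(M-1)),
   with a' the first-column length of λ + s, restores the same form for λ + s.
   When no box is left, the tails telescope into the infinite product. *)

Lemma count_leqS (s : seq nat) k :
  count (fun y => y <= k.+1)%N s =
  (count (fun y => y <= k)%N s + count (pred1 k.+1) s)%N.
Proof.
elim: s => //= y s ->.
have [->|ne] := eqVneq y k.+1; first by rewrite leqnn ltnn /=; lia.
by rewrite leq_eqVlt (negPf ne) /= ltnS; lia.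
Qed.

Lemma sorted_ltn_nth_leq (s : seq nat) a b :
  sorted ltn s -> (a <= b)%N -> (b < size s)%N -> (nth 0 s a <= nth 0 s b)%N.
Proof.
rewrite ltn_sorted_uniq_leq => /andP[_ s_le] ab bs.
by apply: (sorted_leq_nth leq_trans leqnn) => //; rewrite inE (leq_ltn_trans ab).
Qed.

Lemma count_le_nth_sorted (s : seq nat) i k : sorted ltn s -> (i < size s)%N ->
  (nth 0 s i <= k)%N -> (i.+1 <= count (fun y => y <= k)%N s)%N.
Proof.
move=> s_lt hi sik; rewrite -(cat_take_drop i.+1 s) count_cat.
have : all (fun y => y <= k)%N (take i.+1 s).
  apply/allP => y /(nthP 0) [t]; rewrite size_takel // => ht <-.
  by rewrite nth_take // (leq_trans _ sik) // sorted_ltn_nth_leq // -ltnS.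
by rewrite all_count => /eqP->; rewrite size_takel // leq_addr.
Qed.

Lemma count_le_index_sorted (s : seq nat) x k : sorted ltn s -> x \in s ->
  (k < x)%N -> (count (fun y => y <= k)%N s <= index x s)%N.
Proof.
move=> s_lt xs kx; rewrite -{1}(cat_take_drop (index x s) s) count_cat.
have -> : count (fun y => y <= k)%N (drop (index x s) s) = 0%N.
  apply/eqP; rewrite -leqn0 leqNgt -has_count; apply/hasPn => y /(nthP 0) [t].
  rewrite size_drop ltn_subRL => ht <-; rewrite nth_drop -ltnNge.
  by rewrite (leq_trans kx) // -{1}(nth_index 0 xs) sorted_ltn_nth_leq ?leq_addr.
by rewrite addn0 (leq_trans (count_size _ _)) // size_take index_mem xs leqnn.
Qed.

Lemma diffcol_incr_nth (lam : Defs.shape) i :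
  (i < size lam)%N -> diffcol lam (incr_nth lam i) = i.+1.
Proof.
move=> hi; rewrite /diffcol size_incr_nth hi maxnn; congr S.
rewrite (@eq_find _ _ (pred1 i)); last first.
  move=> j /=; rewrite nth_incr_nth [j == i]eq_sym.
  case: (i == j); last by rewrite add0n eqxx.
  by rewrite add1n neq_ltn ltnSn.
rewrite -/(index i (iota 0 (size lam))).
have {1}-> : i = nth 0%N (iota 0 (size lam)) i by rewrite nth_iota.
by rewrite index_uniq ?size_iota ?iota_uniq.
Qed.

Lemma colLen_addBox (lam : Defs.shape) s t : (0 < s)%N -> (0 < t)%N ->
  colLen (addBox lam s) t = (colLen lam t + (s == t))%N.
Proof.
case: s => // s _; case: t => // t _.
by rewrite /colLen /addBox nth_incr_nth /= eqSS addnC.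
Qed.

(* Weaker than "λ + s is a partition": just what makes the column probability
   nonnegative and the edge weight well defined (it divides by q^(λ'_1) - 1). *)
Definition col_admissible (lam : Defs.shape) (s : nat) : bool :=
  (s == 1)%N || ((0 < colLen lam 1) && (colLen lam s <= colLen lam s.-1))%N.

Fixpoint admissible (lam : Defs.shape) (cs : seq nat) : bool :=
  if cs is s :: cs' then
    [&& (0 < s)%N, col_admissible lam s & admissible (addBox lam s) cs']
  else true.

Lemma colLen_addBox1_gt0 (lam : Defs.shape) s :
  (0 < s)%N -> col_admissible lam s -> (0 < colLen (addBox lam s) 1)%N.
Proof.
move=> s_gt0; rewrite colLen_addBox // => /orP[/eqP->|/andP[a_gt0 _]].
  by rewrite addn1.
by rewrite ltn_addr.
Qed.

Section StandardTableau.
Variable T : tableau.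
Hypothesis hT : standard T.

Local Notation col j := (nth [::] T j).
Local Notation n := (tab_size T).

Lemma col_sorted j : sorted ltn (col j).
Proof.
case: hT => _ _ _ hs _; case: (ltnP j (size T)) => hj; last by rewrite nth_default.
by move/allP: hs; apply; rewrite mem_nth.
Qed.

Lemma col_uniq j : uniq (col j).
Proof. exact: sorted_uniq ltn_trans ltnn _ (col_sorted j). Qed.

Lemma size_colS j : (size (col j.+1) <= size (col j))%N.
Proof.
case: hT => _ hsz _ _ _; case: (ltnP j.+1 (size T)) => hj; last by rewrite nth_default.
have geq_trans : transitive geq by move=> a b c /= h1 h2; exact: leq_trans h2 h1.
have := sorted_leq_nth geq_trans (fun a => leqnn a) 0%N hsz.
rewrite size_map => /(_ j j.+1); rewrite !inE (ltnW hj) hj => /(_ isT isT (leqnSn j)).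
by rewrite /= !(nth_map [::]) // ltnW.
Qed.

Lemma row_lt j i : (i < size (col j.+1))%N -> (nth 0 (col j) i < nth 0 (col j.+1) i)%N.
Proof. by case: hT => _ _ _ _; apply. Qed.

Lemma mem_flatten_tab x : (x \in flatten T) = (0 < x <= n)%N.
Proof. by case: hT => _ _ hp _ _; rewrite (perm_mem hp) mem_iota add1n ltnS. Qed.

Lemma uniq_flatten_tab : uniq (flatten T).
Proof. by case: hT => _ _ hp _ _; rewrite (perm_uniq hp) iota_uniq. Qed.

Lemma mem_col_flatten j x : x \in col j -> x \in flatten T.
Proof.
move=> xj; apply/flattenP; exists (col j) => //.
case: (ltnP j (size T)) => hj; first by rewrite mem_nth.
by rewrite nth_default in xj.
Qed.

Lemma col_gt0 j x : x \in col j -> (0 < x)%N.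
Proof. by move/mem_col_flatten; rewrite mem_flatten_tab => /andP[]. Qed.

Definition col_index x := find (fun c => x \in c) T.

Lemma col_indexP x : (0 < x <= n)%N -> (col_index x < size T)%N /\ x \in col (col_index x).
Proof.
rewrite -mem_flatten_tab => /flattenP[c cT xc].
have hx : has (fun c => x \in c) T by apply/hasP; exists c.
by rewrite /col_index -has_find; split=> //; exact: (nth_find [::] hx).
Qed.

Lemma col_index_uniq x j : x \in col j -> j = col_index x.
Proof.
move=> xj; have := mem_col_flatten xj; rewrite mem_flatten_tab => /col_indexP[jT xjx].
have hj : (j < size T)%N by case: ltnP xj => // h; rewrite nth_default.
case: (ltngtP j (col_index x)) => // h; first by have := before_find [::] h; rewrite xj.
have := uniq_flatten_tab.
rewrite -(cat_take_drop j T) flatten_cat cat_uniq => /and3P[_ /hasPn/(_ x) + _].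
rewrite (drop_nth [::] hj) /= mem_cat xj => /(_ isT) /negP[]; apply/flattenP.
by exists (col (col_index x)); rewrite // -(nth_take [::] h) mem_nth // size_take hj.
Qed.

Lemma count_pred1_col x j : (0 < x <= n)%N -> count (pred1 x) (col j) = (j == col_index x).
Proof.
move=> hx; rewrite count_uniq_mem ?col_uniq //; have [_ xm] := col_indexP hx.
case: eqP => [->|ne]; first by rewrite xm.
by case: (boolP (x \in col j)) => // /col_index_uniq.
Qed.

Lemma nth_gamma k j : nth 0 (gamma T k) j = count (fun y => y <= k)%N (col j).
Proof.
case: (ltnP j (size T)) => hj; first by rewrite (nth_map [::]).
by rewrite !nth_default ?size_map.
Qed.

Lemma nth_gamma0 j : nth 0 (gamma T 0) j = 0%N.
Proof.
rewrite nth_gamma; apply/eqP; rewrite -leqn0 leqNgt -has_count.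
by apply/hasPn => y /col_gt0; rewrite -ltnNge.
Qed.

Lemma gammaS k : (k < n)%N -> gamma T k.+1 = addBox (gamma T k) (col_of T k.+1).
Proof.
move=> kn; have [kT _] := @col_indexP k.+1 kn.
apply: (@eq_from_nth _ 0%N); first by rewrite size_incr_nth !size_map kT.
move=> j _; rewrite nth_incr_nth !nth_gamma count_leqS count_pred1_col //.
by rewrite eq_sym addnC.
Qed.

Lemma diffcol_gammaS k : (k < n)%N -> diffcol (gamma T k) (gamma T k.+1) = col_of T k.+1.
Proof.
move=> kn; have [kT _] := @col_indexP k.+1 kn.
by rewrite gammaS // diffcol_incr_nth // size_map.
Qed.

Lemma count_col0_gt0 k j : (0 < count (fun y => y <= k)%N (col j))%N ->
  (0 < count (fun y => y <= k)%N (col 0))%N.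
Proof.
elim: j => // j IH; rewrite -has_count => /hasP [y yj yk]; apply: IH.
have hsz : (0 < size (col j.+1))%N by case: (col j.+1) yj.
have y_ge : (nth 0 (col j.+1) 0 <= y)%N.
  by have [t ht <-] := nthP 0 yj; rewrite sorted_ltn_nth_leq ?col_sorted.
apply: (@count_le_nth_sorted _ 0%N); rewrite ?col_sorted ?(leq_trans hsz (size_colS j)) //.
by rewrite (leq_trans (ltnW (row_lt hsz))) // (leq_trans y_ge yk).
Qed.

(* Row strictness places the box of k+1 below a box of column s-1 that is
   already filled, which is the inequality λ'_s <= λ'_{s-1} needed. *)
Lemma col_admissible_gamma k : (k < n)%N -> col_admissible (gamma T k) (col_of T k.+1).
Proof.
move=> kn; have [kT xm] := @col_indexP k.+1 kn.
rewrite /col_admissible /col_of -/(col_index k.+1).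
case E : (col_index k.+1) xm kT => [//|j] xm jT /=.
rewrite /colLen /= !nth_gamma.
set i := index k.+1 (col j.+1).
have hi : (i < size (col j.+1))%N by rewrite index_mem.
have ub : (count (fun y => y <= k)%N (col j.+1) <= i)%N.
  by rewrite count_le_index_sorted ?col_sorted.
have lb : (i.+1 <= count (fun y => y <= k)%N (col j))%N.
  rewrite count_le_nth_sorted ?col_sorted ?(leq_trans hi (size_colS j)) //.
  by rewrite -ltnS -{1}(nth_index 0 xm) (row_lt hi).
rewrite (@count_col0_gt0 k j) ?(leq_trans _ lb) //=.
by rewrite (leq_trans ub) // ltnW.
Qed.

Lemma admissible_gamma k : (k <= n)%N ->
  admissible (gamma T k) [seq col_of T j | j <- iota k.+1 (n - k)].
Proof.
move=> kn; move e: (n - k)%N => m; elim: m k kn e => [//|m IH] k kn e /=.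
have kn' : (k < n)%N by lia.
rewrite col_admissible_gamma // -gammaS // IH //; lia.
Qed.

End StandardTableau.

Section Series.
Variable R : realType.
Local Open Scope ereal_scope.

Lemma eq_eseries_ge (f g : nat -> \bar R) N :
  (forall i, (N <= i)%N -> f i = g i) ->
  \sum_(N <= i <oo) f i = \sum_(N <= i <oo) g i.
Proof. by move=> fg; apply/congr_lim/funext => n; apply: eq_big_nat => i /andP[/fg]. Qed.

Lemma eseries_ge_mkcond (f : nat -> \bar R) N :
  \sum_(N <= i <oo) f i = \sum_(i <oo) (if (N <= i)%N then f i else 0).
Proof. by rewrite ereal_series eseries_mkcond. Qed.

(* Summation by parts for a nonnegative double series: the weights d vanish
   below K, which is where f may fail to be nonnegative. *)
Lemma nneseries_tail_swap (d : nat -> R) (f : nat -> \bar R) N K :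
  (forall M, (0 <= d M)%R) -> (forall M, (M < K)%N -> d M = 0%R) ->
  (forall M, (K <= M)%N -> 0 <= f M) ->
  \sum_(N <= M <oo) (d M)%:E * \sum_(M <= M' <oo) f M' =
  \sum_(N <= M' <oo) (\sum_(N <= M < M'.+1) d M)%:E * f M'.
Proof.
move=> d_ge0 d_eq0 f_ge0.
pose G M M' := if (N <= M <= M')%N then (d M)%:E * f M' else 0.
have G_ge0 M M' : 0 <= G M M'.
  rewrite /G; case: ifP => // /andP[_ MM']; have [/d_eq0->|KM] := ltnP M K.
    by rewrite mul0e.
  by rewrite mule_ge0 ?lee_fin // f_ge0 // (leq_trans KM).
transitivity (\sum_(M <oo) \sum_(M' <oo) G M M').
  rewrite eseries_ge_mkcond; apply: eq_eseries_ge => M _; rewrite /G.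
  case: (leqP N M) => NM /=; last by rewrite eseries0.
  have [/d_eq0->|KM] := ltnP M K.
    by rewrite mul0e eseries0 // => M' _ _; case: ifP; rewrite ?mul0e.
  rewrite ereal_series -nneseriesZl => [|M' MM']; last by rewrite f_ge0 // (leq_trans KM).
  by rewrite eseries_mkcond.
rewrite nneseries_interchange // [RHS]eseries_ge_mkcond.
apply: eq_eseries_ge => M' _; rewrite (nneseries_split 0 M'.+1) // add0n.
rewrite [X in _ + X]eseries0 ?adde0 => [|M]; last by rewrite /G ltnNge => /negbTE->; rewrite andbF.
case: (leqP N M') => NM'.
  rewrite -sumEFin ge0_sume_distrl => [|M _]; last by rewrite lee_fin.
  rewrite (@big_cat_nat _ _ _ N) ?(leqW NM') //=.
  rewrite big1_seq ?add0e => [|M /andP[_]]; last by rewrite mem_index_iota => /andP[_ MN]; rewrite /G leqNgt MN.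
  by apply: eq_big_nat => M /andP[NM MM']; rewrite /G NM -ltnS MM'.
apply: big1_seq => M; rewrite mem_index_iota /G => /andP[_ ?]; case: ifP => // /andP[+ ?]; lia.
Qed.

End Series.

Section Algorithm.
Variables (R : realType) (q u : R).
Hypotheses (q_gt1 : 1 < q) (u_gt0 : 0 < u) (u_lt1 : u < 1).

Definition tails_prod (N M : nat) : R := \prod_(N <= j < M) tails q u j.

Definition qpoch (b M : nat) : R := \prod_(j < b) (1 - q ^+ j / q ^+ M).

Definition dqpoch (b M : nat) : R := qpoch b M - qpoch b M.-1.

Definition boxprob (lam : Defs.shape) (M s : nat) : R := heads q u M * colprob q lam M s.

Fixpoint mprod (lam : Defs.shape) (cs : seq nat) : R :=
  if cs is s :: cs' then mweight q u lam s * mprod (addBox lam s) cs' else 1.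

Let q_gt0 : 0 < q. Proof. exact: lt_trans q_gt1. Qed.
Let qX_gt0 n : 0 < q ^+ n. Proof. exact: exprn_gt0. Qed.
Let qX_neq0 n : q ^+ n != 0. Proof. by rewrite gt_eqF. Qed.
Let qX_ge1 n : 1 <= q ^+ n. Proof. by rewrite exprn_ege1 // ltW. Qed.
Let qX_gt1 n : (0 < n)%N -> 1 < q ^+ n. Proof. by move=> n_gt0; rewrite exprn_egt1 // -lt0n. Qed.
Let ler_qX m n : (q ^+ m <= q ^+ n) = (m <= n)%N. Proof. exact: ler_eXn2l. Qed.
Let qX_sub1_neq0 n : (0 < n)%N -> q ^+ n - 1 != 0.
Proof. by move=> n_gt0; rewrite subr_eq0 gt_eqF // qX_gt1. Qed.

Lemma tails_gt0 j : 0 < tails q u j.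
Proof. by rewrite subr_gt0 ltr_pdivrMr // mul1r (lt_le_trans u_lt1). Qed.

Lemma tails_le1 j : tails q u j <= 1.
Proof. by rewrite lerBlDr lerDl divr_ge0 // ltW. Qed.

Lemma tails_prod_gt0 N M : 0 < tails_prod N M.
Proof. by apply: prodr_gt0 => j _; exact: tails_gt0. Qed.

Lemma tails_prod_le1 N M : tails_prod N M <= 1.
Proof. by apply: prodr_ile1 => j _; rewrite tails_le1 ltW ?tails_gt0. Qed.

Lemma tails_prod_cat N M P : (N <= M)%N -> (M <= P)%N ->
  tails_prod N M * tails_prod M P = tails_prod N P.
Proof. by move=> NM MP; rewrite -big_cat_nat. Qed.

Lemma tails_prod_nonincr N : {homo tails_prod N : n m / (n <= m)%N >-> m <= n}.
Proof.
move=> n m nm; case: (leqP n N) => nN; first by rewrite [leRHS]big_geq ?tails_prod_le1.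
rewrite -(tails_prod_cat (ltnW nN) nm) ler_piMr ?tails_prod_le1 //.
exact/ltW/tails_prod_gt0.
Qed.

Lemma tails_prod_cvgn N : cvgn (tails_prod N).
Proof.
apply: nonincreasing_is_cvgn; first exact: tails_prod_nonincr.
by exists 0 => _ [n _ <-]; exact/ltW/tails_prod_gt0.
Qed.

Lemma tailprod_ge0 N : 0 <= tailprod q u N.
Proof. by apply: limr_ge (@tails_prod_cvgn N) _; apply: nearW => n; exact/ltW/tails_prod_gt0. Qed.

Lemma tails_prod_tailprod N M : (N <= M)%N -> tails_prod N M * tailprod q u M = tailprod q u N.
Proof.
move=> NM; apply/esym/cvg_lim => //.
apply: cvg_trans (cvgM (cvg_cst (tails_prod N M)) (@tails_prod_cvgn M)).
by apply: near_eq_cvg; near do rewrite /= tails_prod_cat //; exact: nbhs_infty_ge.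
Unshelve. all: by end_near. Qed.

Lemma qpoch_eq0 b M : (M < b)%N -> qpoch b M = 0.
Proof. by move=> Mb; rewrite /qpoch (bigD1 (Ordinal Mb)) //= divff // subrr mul0r. Qed.

Lemma qpoch_ge0 b M : 0 <= qpoch b M.
Proof.
case: (ltnP M b) => [/qpoch_eq0->//|bM].
apply: prodr_ge0 => j _; rewrite subr_ge0 ler_pdivrMr // mul1r ler_qX.
exact: leq_trans (ltnW (ltn_ord j)) bM.
Qed.

Lemma qpochSl b M : qpoch b.+1 M = qpoch b M * (1 - q ^+ b / q ^+ M).
Proof. by rewrite /qpoch big_ord_recr. Qed.

Lemma qpochSr b M : qpoch b.+1 M.+1 = (1 - 1 / q ^+ M.+1) * qpoch b M.
Proof.
rewrite /qpoch big_ord_recl expr0; congr (_ * _); apply: eq_bigr => j _.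
by rewrite lift0 !exprS; congr (1 - _); field; rewrite qX_neq0 gt_eqF.
Qed.

Lemma dqpochE b M : (0 < M)%N -> dqpoch b M = qpoch b M * (q ^+ b - 1) / (q ^+ M - 1).
Proof.
case: M => // M _; case: b => [|b]; first by rewrite /dqpoch /qpoch !big_ord0 !subrr mulr0 mul0r.
rewrite /dqpoch /= qpochSr qpochSl.
have := qX_sub1_neq0 (ltn0Sn M); rewrite exprS => qM1.
by rewrite exprS; field; rewrite qM1 qX_neq0 gt_eqF.
Qed.

Lemma dqpoch_ge0 b M : 0 <= dqpoch b M.
Proof.
case: M => [|M]; first by rewrite /dqpoch subrr.
by rewrite dqpochE // divr_ge0 ?mulr_ge0 ?qpoch_ge0 // subr_ge0.
Qed.

Lemma dqpoch_eq0 b M : (M < b)%N -> dqpoch b M = 0.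
Proof.
case: M => [|M] Mb; first by rewrite /dqpoch subrr.
by rewrite dqpochE // qpoch_eq0 // !mul0r.
Qed.

Lemma sum_dqpoch b n : (0 < b)%N -> \sum_(1 <= M < n.+1) dqpoch b M = qpoch b n.
Proof.
move=> b_gt0; rewrite big_add1 /= (eq_bigr (fun k => qpoch b k.+1 - qpoch b k)) //.
by rewrite telescope_sumr // (@qpoch_eq0 b 0 b_gt0) subr0.
Qed.

Lemma qpoch_cvg1 b : qpoch b n @[n --> \oo] --> (1 : R).
Proof.
elim: b => [|b IH]; first by under eq_fun do rewrite /qpoch big_ord0; exact: cvg_cst.
have geo : (fun n => q ^+ b / q ^+ n) @ \oo --> (0 : R).
  rewrite (_ : (fun n => _) = geometric (q ^+ b) q^-1); last first.
    by apply/funext => n; rewrite /geometric /= exprVn.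
  by apply: cvg_geometric; rewrite ger0_norm ?invr_ge0 ?ltW // invf_lt1.
under eq_fun do rewrite qpochSl.
have := cvgM IH (cvgB (cvg_cst (1 : R)) geo); rewrite subr0 mulr1; apply.
Qed.

Lemma boxprob_ge0 lam M s : (colLen lam 1 <= M)%N -> col_admissible lam s -> 0 <= boxprob lam M s.
Proof.
rewrite /col_admissible => aM adm; apply: mulr_ge0; first by rewrite divr_ge0 ?ltW.
rewrite /colprob; case: eqP adm => [_ _|_ /= /andP[_ hs]]; apply: divr_ge0; rewrite ?subr_ge0 //.
  by rewrite ler_pdivlMr // mul1r ler_qX.
by rewrite ler_pM2l // lef_pV2 ?posrE // ler_qX.
Qed.

Lemma boxprob_col1 lam : boxprob lam (colLen lam 1) 1 = 0.
Proof. by rewrite /boxprob /colprob /= divff // subrr mul0r mulr0. Qed.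

Lemma qpoch_boxprob lam s M : (0 < M)%N -> (0 < s)%N -> col_admissible lam s ->
  qpoch (colLen lam 1) M * boxprob lam M s =
  mweight q u lam s * dqpoch (colLen (addBox lam s) 1) M.
Proof.
rewrite /col_admissible => M_gt0 s_gt0 adm; rewrite colLen_addBox // dqpochE //.
have qM1 := qX_sub1_neq0 M_gt0.
rewrite /boxprob /heads /colprob /mweight; case: eqP adm => [-> _|_ /= /andP[a_gt0 _]].
  rewrite addn1 qpochSl exprS.
  have := qX_sub1_neq0 (ltn0Sn (colLen lam 1)); rewrite exprS => qa1.
  by field; rewrite qM1 qa1 !qX_neq0.
by rewrite addn0; field; rewrite qM1 qX_sub1_neq0 // !qX_neq0.
Qed.

Local Open Scope ereal_scope.

Lemma probFrom_cons s cs lam N :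
  probFrom q u (s :: cs) lam N =
  \sum_(N <= M <oo) (tails_prod N M * boxprob lam M s)%:E * probFrom q u cs (addBox lam s) M.
Proof. by apply/congr_lim/funext => n; apply: eq_bigr => M _; rewrite /boxprob mulrA. Qed.

(* Only the step s = 1 with coin M = λ'_1 leaves the region M >= λ'_1 where
   the remaining probabilities are known to be nonnegative; its probability is 0. *)
Lemma boxprob_probFrom_ge0 s cs lam M :
  (forall lam' N, admissible lam' cs -> (colLen lam' 1 <= N)%N ->
     0 <= probFrom q u cs lam' N) ->
  admissible lam (s :: cs) -> (colLen lam 1 <= M)%N ->
  0 <= (boxprob lam M s)%:E * probFrom q u cs (addBox lam s) M.
Proof.
move=> P_ge0 /and3P[s_gt0 adm adm'] aM.
have [/andP[/eqP-> /eqP->]|] := boolP ((s == 1%N) && (M == colLen lam 1)).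
  by rewrite boxprob_col1 mul0e.
rewrite negb_and => sM; apply: mule_ge0; first by rewrite lee_fin boxprob_ge0.
apply: P_ge0 => //; rewrite colLen_addBox //.
case: eqP sM => [_ /= Ma|_ _]; last by rewrite addn0.
by rewrite addn1 ltn_neqAle eq_sym Ma.
Qed.

Lemma probFrom_ge0 cs lam N :
  admissible lam cs -> (colLen lam 1 <= N)%N -> 0 <= probFrom q u cs lam N.
Proof.
elim: cs lam N => [|s cs IH] lam N adm aN; first by rewrite lee_fin tailprod_ge0.
rewrite probFrom_cons; apply: nneseries_ge0 => M NM _.
rewrite EFinM -muleA mule_ge0 ?lee_fin ?(ltW (tails_prod_gt0 _ _)) //.
by apply: boxprob_probFrom_ge0 => //; exact: leq_trans NM.
Qed.

Lemma tails_prod_probFrom_cons s cs lam M :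
  admissible lam (s :: cs) -> (0 < M)%N -> (colLen lam 1 <= M)%N ->
  (tails_prod 1 M)%:E * probFrom q u (s :: cs) lam M =
  \sum_(M <= M' <oo) (tails_prod 1 M' * boxprob lam M' s)%:E
                       * probFrom q u cs (addBox lam s) M'.
Proof.
move=> adm M_gt0 aM; rewrite probFrom_cons ereal_series -nneseriesZl => [|M' MM'].
  rewrite [RHS]ereal_series; apply: eq_eseriesr => M' MM'.
  by rewrite muleA -EFinM mulrA tails_prod_cat.
rewrite EFinM -muleA mule_ge0 ?lee_fin ?(ltW (tails_prod_gt0 _ _)) //.
apply: boxprob_probFrom_ge0 (leq_trans aM MM') => // *; exact: probFrom_ge0.
Qed.

Definition coin_mixture (lam : Defs.shape) (cs : seq nat) : \bar R :=
  \sum_(1 <= M <oo) (dqpoch (colLen lam 1) M * tails_prod 1 M)%:E * probFrom q u cs lam M.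

Lemma coin_mixture_nil lam : (0 < colLen lam 1)%N -> coin_mixture lam [::] = (tailprod q u 1)%:E.
Proof.
move=> a_gt0; rewrite /coin_mixture.
rewrite (@eq_eseries_ge _ _ (fun M => (dqpoch (colLen lam 1) M * tailprod q u 1)%:E)) => [|M M_gt0].
  apply: (cvg_lim (@ereal_hausdorff R)); rewrite -cvg_shiftS /=.
  under eq_fun do rewrite sumEFin -big_distrl /= sum_dqpoch //.
  apply: cvg_EFin; first exact: nearW.
  have := cvgM (qpoch_cvg1 (colLen lam 1)) (cvg_cst (tailprod q u 1)); rewrite mul1r; apply.
by rewrite /= -EFinM -mulrA tails_prod_tailprod.
Qed.

Lemma coin_mixture_cons s cs lam :
  admissible lam (s :: cs) -> (0 < colLen lam 1)%N ->
  coin_mixture lam (s :: cs) =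
  \sum_(1 <= M <oo) (qpoch (colLen lam 1) M * (tails_prod 1 M * boxprob lam M s))%:E
                      * probFrom q u cs (addBox lam s) M.
Proof.
move=> adm a_gt0; rewrite /coin_mixture.
pose f M' := (tails_prod 1 M' * boxprob lam M' s)%:E * probFrom q u cs (addBox lam s) M'.
transitivity (\sum_(1 <= M <oo) (dqpoch (colLen lam 1) M)%:E * \sum_(M <= M' <oo) f M').
  apply: eq_eseries_ge => M M_gt0; have [Ma|aM] := ltnP M (colLen lam 1).
    by rewrite dqpoch_eq0 // mul0r !mul0e.
  by rewrite EFinM -muleA tails_prod_probFrom_cons.
rewrite (@nneseries_tail_swap _ _ _ _ (colLen lam 1)) => [|M|M|M aM].
- by apply: eq_eseries_ge => M M_gt0; rewrite sum_dqpoch // muleA -EFinM.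
- exact: dqpoch_ge0.
- exact: dqpoch_eq0.
rewrite /f EFinM -muleA mule_ge0 ?lee_fin ?(ltW (tails_prod_gt0 _ _)) //.
apply: boxprob_probFrom_ge0 aM => // *; exact: probFrom_ge0.
Qed.

Lemma sum_qpoch_boxprob s cs lam : admissible lam (s :: cs) ->
  coin_mixture (addBox lam s) cs = (tailprod q u 1 * mprod (addBox lam s) cs)%:E ->
  \sum_(1 <= M <oo) (qpoch (colLen lam 1) M * (tails_prod 1 M * boxprob lam M s))%:E
                      * probFrom q u cs (addBox lam s) M =
  (tailprod q u 1 * mprod lam (s :: cs))%:E.
Proof.
move=> adm0; have /and3P[s_gt0 adm adm'] := adm0; rewrite /coin_mixture => IH.
set a' := colLen (addBox lam s) 1.
rewrite (@eq_eseries_ge _ _ (fun M => (mweight q u lam s)%:E *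
  ((dqpoch a' M * tails_prod 1 M)%:E * probFrom q u cs (addBox lam s) M))) => [|M M_gt0].
  rewrite nneseriesZl => [|M _]; first by rewrite IH -EFinM /= mulrCA.
  have [Ma|aM] := ltnP M a'; first by rewrite dqpoch_eq0 // mul0r mul0e.
  by rewrite mule_ge0 ?lee_fin ?mulr_ge0 ?dqpoch_ge0 ?(ltW (tails_prod_gt0 _ _)) ?probFrom_ge0.
rewrite muleA -EFinM; congr (_%:E * _).
by rewrite mulrCA qpoch_boxprob //; ring.
Qed.

Lemma coin_mixtureE cs lam : admissible lam cs -> (0 < colLen lam 1)%N ->
  coin_mixture lam cs = (tailprod q u 1 * mprod lam cs)%:E.
Proof.
elim: cs lam => [|s cs IH] lam adm a_gt0; first by rewrite coin_mixture_nil // mulr1.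
have /and3P[s_gt0 sadm adm'] := adm.
by rewrite coin_mixture_cons // sum_qpoch_boxprob // IH // colLen_addBox1_gt0.
Qed.

Lemma probFrom_colLen1_eq0 cs lam : admissible lam cs -> colLen lam 1 = 0%N ->
  probFrom q u cs lam 1 = (tailprod q u 1 * mprod lam cs)%:E.
Proof.
case: cs => [|s cs] adm a0; first by rewrite mulr1.
have /and3P[s_gt0 sadm adm'] := adm.
rewrite probFrom_cons -(sum_qpoch_boxprob adm) ?coin_mixtureE ?colLen_addBox1_gt0 //.
by apply: eq_eseries_ge => M _; rewrite a0 /qpoch big_ord0 mul1r.
Qed.

Lemma probFrom_eq_nth cs (lam lam' : Defs.shape) N :
  nth 0%N lam =1 nth 0%N lam' -> probFrom q u cs lam N = probFrom q u cs lam' N.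
Proof.
elim: cs lam lam' N => [//|s cs IH] lam lam' N eq_lam /=.
apply/congr_lim/funext => n; apply: eq_bigr => M _.
rewrite /colprob /colLen !eq_lam (IH _ (addBox lam' s)) // => i.
by rewrite !nth_incr_nth eq_lam.
Qed.

End Algorithm.

Lemma mprod_gamma (R : realType) (q u : R) T k : standard T -> (k <= tab_size T)%N ->
  mprod q u (gamma T k) [seq col_of T j | j <- iota k.+1 (tab_size T - k)] =
  \prod_(k <= i < tab_size T) medge q u (gamma T i) (gamma T i.+1).
Proof.
move=> hT kn; move e: (tab_size T - k)%N => m; elim: m k kn e => [|m IH] k kn e /=.
  by rewrite big_geq //; lia.
have kn' : (k < tab_size T)%N by lia.
by rewrite big_ltn // /medge diffcol_gammaS // -gammaS // IH //; lia.
Qed.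

Theorem corollary4 (R : realType) (q u : R) (T : tableau) :
  1 < q -> 0 < u < 1 -> standard T ->
  probOutput q u T =
  (tailprod q u 1 *
   \prod_(i < tab_size T) medge q u (gamma T i) (gamma T i.+1))%:E.
Proof.
move=> q_gt1 /andP[u_gt0 u_lt1] hT.
have := admissible_gamma hT (leq0n (tab_size T)); have := mprod_gamma q u hT (leq0n (tab_size T)).
rewrite subn0 big_mkord /probOutput => <- adm.
rewrite (@probFrom_eq_nth R q u _ _ (gamma T 0)) => [|i]; last by rewrite nth_nil nth_gamma0.
by apply: probFrom_colLen1_eq0; rewrite // /colLen nth_gamma0.
Qed.
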